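(* Let $Q$ be a symmetric Leibniz algebra and $L$ a dense subalgebra of $Q$, and suppose $Q$ is a multiplicatively semiprime algebra of quotients of $L$. Then for every essential ideal $I$ of $L$, the extension $I\subseteq Q$ is dense.
   Context: A symmetric Leibniz algebra satisfies both $[x,[y,z]]=[[x,y],z]-[[x,z],y]$ and $[x,[y,z]]=[[x,y],z]+[y,[x,z]]$. For $x\in Q$, $R_x(u)=[u,x]$, $L_x(u)=[x,u]$. $M(Q)$ is the associative subalgebra of $\mathrm{End}(Q)$ generated by the identity and all $R_x,L_x$ ($x\in Q$). For a subalgebra $K$ of $Q$, $K^{ann}=\{\mu\in M(Q):\mu(x)=0\ \forall x\in K\}$, and $K$ is dense in $Q$ (the extension $K\subseteq Q$ is dense) if $K^{ann}=\{0\}$. A Leibniz algebra is semiprime if $[I,I]\ne\{0\}$ for every nonzero ideal $I$ (ideals: subspaces $I$ with $[I,L]\subseteq I$, $[L,I]\subseteq I$); an associative algebra is semiprime if it has no nonzero two-sided ideal with zero square. $Q$ is multiplicatively semiprime if $Q$ and $M(Q)$ are both semiprime. An ideal $I$ of $L$ is essential if $I\cap J\ne\{0\}$ for each nonzero ideal $J$ of $L$. With $\mathscr{A}_Q(L)$ the associative algebra generated by $R_x,L_y$ ($x,y\in L$) acting on $Q$, ${}_L(q)=\mathbb{F}q+\{\sum\xi_i(q):\xi_i\in\mathscr{A}_Q(L)\}$ and $(L:q)=\{x\in L:[x,{}_L(q)]\subseteq L,[{}_L(q),x]\subseteq L\}$; $Q$ is an algebra of quotients of $L$ if for all $p,q\in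 Q$, $p\ne0$, there is $x\in(L:q)$ with $[x,p]\ne0$ or $y\in(L:q)$ with $[p,y]\ne0$. *)

From mathcomp Require Import all_boot all_algebra.
Set Implicit Arguments. Unset Strict Implicit. Unset Printing Implicit Defensive.
Import GRing.Theory.
Local Open Scope ring_scope.

Section LeibnizDefs.
Variables (F : fieldType) (Q : lmodType F) (br : Q -> Q -> Q).

Definition bilinear_br : Prop :=
  (forall a x y z, br (a *: x + y) z = a *: br x z + br y z) /\
  (forall a x y z, br x (a *: y + z) = a *: br x y + br x z).

Definition symmetric_leibniz : Prop :=
  (forall x y z, br x (br y z) = br (br x y) z - br (br x z) y) /\
  (forall x y z, br x (br y z) = br (br x y) z + br y (br x z)).

Definition Rop (x : Q) : Q -> Q := fun u => br u x.
Definition Lop (x : Q) : Q -> Q := fun u => br x u.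

Definition subspace (S : Q -> Prop) : Prop :=
  S 0 /\ (forall a x y, S x -> S y -> S (a *: x + y)).

Definition subalgebra (S : Q -> Prop) : Prop :=
  subspace S /\ (forall x y, S x -> S y -> S (br x y)).

Definition ideal_of (L I : Q -> Prop) : Prop :=
  subspace I /\ (forall x, I x -> L x) /\
  (forall x y, I x -> L y -> I (br x y)) /\
  (forall x y, I x -> L y -> I (br y x)).

Definition nonzero_set (S : Q -> Prop) : Prop := exists x, S x /\ x <> 0.

Definition semiprime_leibniz (L : Q -> Prop) : Prop :=
  forall I, ideal_of L I -> nonzero_set I ->
    exists x y, I x /\ I y /\ br x y <> 0.

Definition essential_ideal (L I : Q -> Prop) : Prop :=
  ideal_of L I /\
  forall J, ideal_of L J -> nonzero_set J -> exists x, I x /\ J x /\ x <> 0.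

(* M(Q): associative subalgebra of End(Q) generated by id and all R_x, L_x *)
Inductive inM : (Q -> Q) -> Prop :=
  | inM_id : inM id
  | inM_R x : inM (Rop x)
  | inM_L x : inM (Lop x)
  | inM_zero : inM (fun _ => 0)
  | inM_add f g : inM f -> inM g -> inM (fun u => f u + g u)
  | inM_scale a f : inM f -> inM (fun u => a *: f u)
  | inM_comp f g : inM f -> inM g -> inM (fun u => f (g u)).

Definition nonzero_map (f : Q -> Q) : Prop := exists u, f u <> 0.

Definition M_ideal (J : (Q -> Q) -> Prop) : Prop :=
  (forall f, J f -> inM f) /\
  J (fun _ => 0) /\
  (forall f g, J f -> J g -> J (fun u => f u + g u)) /\
  (forall a f, J f -> J (fun u => a *: f u)) /\
  (forall f g, inM f -> J g -> J (fun u => f (g u))) /\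
  (forall f g, J f -> inM g -> J (fun u => f (g u))).

Definition M_semiprime : Prop :=
  forall J, M_ideal J -> (exists f, J f /\ nonzero_map f) ->
    exists f g, J f /\ J g /\ nonzero_map (fun u => f (g u)).

Definition mult_semiprime : Prop :=
  semiprime_leibniz (fun _ => True) /\ M_semiprime.

Definition dense (K : Q -> Prop) : Prop :=
  forall mu, inM mu -> (forall x, K x -> mu x = 0) -> forall u, mu u = 0.

(* A_Q(L): associative algebra generated by R_x, L_y (x, y in L) *)
Inductive inA (L : Q -> Prop) : (Q -> Q) -> Prop :=
  | inA_R x : L x -> inA L (Rop x)
  | inA_L x : L x -> inA L (Lop x)
  | inA_zero : inA L (fun _ => 0)
  | inA_add f g : inA L f -> inA L g -> inA L (fun u => f u + g u)
  | inA_scale a f : inA L f -> inA L (fun u => a *: f u)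
  | inA_comp f g : inA L f -> inA L g -> inA L (fun u => f (g u)).

Definition genL (L : Q -> Prop) (q p : Q) : Prop :=
  exists (a : F) (n : nat) (xi : 'I_n -> Q -> Q),
    (forall i, inA L (xi i)) /\ p = a *: q + \sum_(i < n) xi i q.

Definition Lcolon (L : Q -> Prop) (q x : Q) : Prop :=
  L x /\ (forall p, genL L q p -> L (br x p)) /\
         (forall p, genL L q p -> L (br p x)).

Definition algebra_of_quotients (L : Q -> Prop) : Prop :=
  forall p q, p <> 0 ->
    (exists x, Lcolon L q x /\ br x p <> 0) \/
    (exists y, Lcolon L q y /\ br p y <> 0).

End LeibnizDefs.

From mathcomp Require Import all_boot all_algebra.
Set Implicit Arguments. Unset Strict Implicit. Unset Printing Implicit Defensive.
Import GRing.Theory.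
Local Open Scope ring_scope.

(* Let mu in M(Q) vanish on I.  Density of L and [I, L] in I show that I^ann is
   a two-sided ideal of M(Q) and that it kills everything of the form [i, v] or
   [v, i] with i in I.  The elements of I^ann whose values are killed by all of
   I^ann form a square-zero ideal of M(Q), hence vanish; in particular
   L_i mu = R_i mu = 0, so p = mu u annihilates I.  If p <> 0, the quotient
   property and the Leibniz identities produce a nonzero element of L
   annihilating I; these elements form an ideal of L, so by essentiality some
   nonzero k in I annihilates I.  The same square-zero argument gives
   L_k = R_k = 0, and then F k is a nonzero ideal of Q with [F k, F k] = 0. *)

Definition vanishes_on {V : zmodType} (K : V -> Prop) (f : V -> V) :=
  forall x, K x -> f x = 0.

Section Bilinear.
Variables (F : fieldType) (Q : lmodType F) (br : Q -> Q -> Q).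
Hypothesis br_bilinear : bilinear_br br.

Lemma br0r (x : Q) : br 0 x = 0.
Proof.
by have := br_bilinear.1 (-1) 0 0 x; rewrite scaler0 addr0 scaleN1r addNr.
Qed.

Lemma brr0 (x : Q) : br x 0 = 0.
Proof.
by have := br_bilinear.2 (-1) x 0 0; rewrite scaler0 addr0 scaleN1r addNr.
Qed.

Lemma brZl (a : F) (x y : Q) : br (a *: x) y = a *: br x y.
Proof. by have := br_bilinear.1 a x 0 y; rewrite addr0 br0r addr0. Qed.

Lemma brZr (a : F) (x y : Q) : br x (a *: y) = a *: br x y.
Proof. by have := br_bilinear.2 a x y 0; rewrite addr0 brr0 addr0. Qed.

Lemma inM_linear (f : Q -> Q) : inM br f ->
  forall a x y, f (a *: x + y) = a *: f x + f y.
Proof.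
elim=> [|z|z||g h _ IHg _ IHh|b g _ IH|g h _ IHg _ IHh] a x y //=.
- by rewrite /Rop br_bilinear.1.
- by rewrite /Lop br_bilinear.2.
- by rewrite scaler0 addr0.
- by rewrite IHg IHh scalerDr addrACA.
- by rewrite IH scalerDr !scalerA mulrC.
- by rewrite IHh IHg.
Qed.

Lemma inM0 (f : Q -> Q) : inM br f -> f 0 = 0.
Proof.
by move=> Mf; have := inM_linear Mf (-1) 0 0; rewrite scaler0 addr0 scaleN1r addNr.
Qed.

Lemma inMD (f : Q -> Q) : inM br f -> forall x y, f (x + y) = f x + f y.
Proof. by move=> Mf x y; have := inM_linear Mf 1 x y; rewrite !scale1r. Qed.

Lemma inMZ (f : Q -> Q) : inM br f -> forall a x, f (a *: x) = a *: f x.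
Proof.
by move=> Mf a x; have := inM_linear Mf a x 0; rewrite !addr0 inM0 // addr0.
Qed.

Lemma M_semiprime_square_zero (J : (Q -> Q) -> Prop) :
  M_semiprime br -> M_ideal br J ->
  (forall f g, J f -> J g -> forall u, f (g u) = 0) ->
  forall h, J h -> forall u, h u = 0.
Proof.
move=> Msp idJ JJ0 h Jh u; case: (eqVneq (h u) 0) => // /eqP hu; exfalso.
have [f [g [Jf [Jg [v fgv]]]]] := Msp J idJ (ex_intro _ h (conj Jh (ex_intro _ u hu))).
exact/fgv/(JJ0 f g).
Qed.

Lemma semiprime_central_eq0 (k : Q) :
  semiprime_leibniz br (fun _ => True) ->
  (forall y, br k y = 0) -> (forall y, br y k = 0) -> k = 0.
Proof.
move=> Qsp kl kr; case: (eqVneq k 0) => // /eqP k0; exfalso.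
have idFk : ideal_of br (fun _ => True) (fun v => exists a, v = a *: k).
  split; last split=> //; last split.
  - split; first by exists 0; rewrite scale0r.
    by move=> a _ _ [b ->] [c ->]; exists (a * b + c); rewrite scalerDl scalerA.
  - by move=> _ y [a ->] _; exists 0; rewrite scale0r brZl kl scaler0.
  - by move=> _ y [a ->] _; exists 0; rewrite scale0r brZr kr scaler0.
have Fk_k : exists a, k = a *: k by exists 1; rewrite scale1r.
have [_ [y [[a ->] [_ brk]]]] := Qsp _ idFk (ex_intro _ k (conj Fk_k k0)).
by apply: brk; rewrite brZl kl scaler0.
Qed.

Lemma genL_self (L : Q -> Prop) (q : Q) : genL br L q q.
Proof.
exists 1, 0%N, (fun _ _ => 0); split; first by case.
by rewrite big_ord0 addr0 scale1r.
Qed.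

Section IdealOfDense.
Variables (L I : Q -> Prop).
Hypotheses (L_dense : dense br L) (I_ideal : ideal_of br L I).

Definition ann_kernel (v : Q) :=
  forall nu, inM br nu -> vanishes_on I nu -> nu v = 0.

Lemma ann_kernel_brl (i v : Q) : I i -> ann_kernel (br i v).
Proof.
move=> Ii nu Mnu nuI.
apply: (L_dense (inM_comp Mnu (inM_L br i))) => x Lx.
exact/nuI/I_ideal.2.2.1.
Qed.

Lemma ann_kernel_brr (i v : Q) : I i -> ann_kernel (br v i).
Proof.
move=> Ii nu Mnu nuI.
apply: (L_dense (inM_comp Mnu (inM_R br i))) => x Lx.
exact/nuI/I_ideal.2.2.2.
Qed.

Lemma vanishes_on_comp (g nu : Q -> Q) : inM br g -> inM br nu ->
  vanishes_on I nu -> vanishes_on I (fun v => nu (g v)).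
Proof.
move=> Mg; elim: Mg nu => [|x|x||f h _ IHf _ IHh|a f _ IH|f h Mf IHf _ IHh]
  nu Mnu nuI i Ii //=.
- exact: nuI.
- exact: ann_kernel_brl.
- exact: ann_kernel_brr.
- exact: inM0.
- by rewrite inMD // IHf // IHh // addr0.
- by rewrite inMZ // IH // scaler0.
- apply: (IHh (fun v => nu (f v))) => //; first exact: inM_comp.
  by move=> j Ij; apply: IHf.
Qed.

Definition ann_sqzero (h : Q -> Q) :=
  [/\ inM br h, vanishes_on I h & forall v, ann_kernel (h v)].

Lemma M_ideal_ann_sqzero : M_ideal br ann_sqzero.
Proof.
split; first by move=> f [].
split; first by split; [exact: inM_zero | by [] | move=> v nu Mnu _; exact: inM0].
split.
  move=> f g [Mf fI fK] [Mg gI gK]; split; first exact: inM_add.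
    by move=> i Ii; rewrite fI // gI // addr0.
  by move=> v nu Mnu nuI; rewrite inMD // fK // gK // addr0.
split.
  move=> a f [Mf fI fK]; split; first exact: inM_scale.
    by move=> i Ii; rewrite fI // scaler0.
  by move=> v nu Mnu nuI; rewrite inMZ // fK // scaler0.
split.
  move=> f g Mf [Mg gI gK]; split; first exact: inM_comp.
    by move=> i Ii; rewrite gI // inM0.
  move=> v nu Mnu nuI; apply: (gK v (fun w => nu (f w))); first exact: inM_comp.
  exact: vanishes_on_comp.
move=> f g [Mf fI fK] Mg; split; first exact: inM_comp.
  exact: vanishes_on_comp.
by move=> v; apply: fK.
Qed.

Lemma ann_sqzero_eq0 (h : Q -> Q) : M_semiprime br -> ann_sqzero h ->
  forall v, h v = 0.
Proof.
move=> Msp; apply: (M_semiprime_square_zero Msp M_ideal_ann_sqzero).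
by move=> f g [Mf fI _] [_ _ gK] u; apply: gK.
Qed.

Definition annihilates_ideal (v : Q) := forall i, I i -> br i v = 0 /\ br v i = 0.

Lemma ann_value_annihilates_ideal (mu : Q -> Q) (u : Q) : M_semiprime br ->
  inM br mu -> vanishes_on I mu -> annihilates_ideal (mu u).
Proof.
move=> Msp Mmu muI i Ii; split.
- apply: (@ann_sqzero_eq0 (fun v => br i (mu v))) => //; split.
  + exact: inM_comp (inM_L br i) Mmu.
  + by move=> j Ij; rewrite muI // brr0.
  + by move=> v; apply: ann_kernel_brl.
- apply: (@ann_sqzero_eq0 (fun v => br (mu v) i)) => //; split.
  + exact: inM_comp (inM_R br i) Mmu.
  + by move=> j Ij; rewrite muI // br0r.
  + by move=> v; apply: ann_kernel_brr.
Qed.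

Lemma annihilates_ideal_central (k : Q) : M_semiprime br ->
  I k -> annihilates_ideal k -> (forall y, br k y = 0) /\ (forall y, br y k = 0).
Proof.
move=> Msp Ik kI; split; apply: ann_sqzero_eq0 => //; split.
- exact: inM_L.
- by move=> i Ii; case: (kI i Ii).
- by move=> v; apply: ann_kernel_brl.
- exact: inM_R.
- by move=> i Ii; case: (kI i Ii).
- by move=> v; apply: ann_kernel_brr.
Qed.

Hypothesis br_leibniz : symmetric_leibniz br.

Lemma annihilates_ideal_br (x y : Q) : annihilates_ideal x -> L y ->
  annihilates_ideal (br x y) /\ annihilates_ideal (br y x).
Proof.
have [[_ _] [_ [Ibrl Ibrr]]] := I_ideal.
have [leib1 leib2] := br_leibniz.
move=> xI Ly; split=> i Ii; split.
- by rewrite leib2 (xI i Ii).1 br0r (xI _ (Ibrl _ _ Ii Ly)).2 addr0.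
- have := leib1 x y i.
  by rewrite (xI _ (Ibrr _ _ Ii Ly)).2 (xI i Ii).2 br0r subr0 => <-.
- by rewrite leib2 (xI _ (Ibrl _ _ Ii Ly)).1 (xI i Ii).1 brr0 addr0.
- have := leib1 y x i.
  by rewrite (xI i Ii).2 brr0 (xI _ (Ibrr _ _ Ii Ly)).1 subr0 => <-.
Qed.

Lemma ideal_annihilator (L_sub : subalgebra br L) :
  ideal_of br L (fun v => L v /\ annihilates_ideal v).
Proof.
have [[L0 Llin] Lbr] := L_sub.
split; last split; first split.
- by split=> // i _; rewrite br0r brr0.
- move=> a x y [Lx xI] [Ly yI]; split; first exact: Llin.
  move=> i Ii; have [xi1 xi2] := xI i Ii; have [yi1 yi2] := yI i Ii.
  by rewrite br_bilinear.1 br_bilinear.2 xi1 xi2 yi1 yi2 scaler0 addr0.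
- by move=> x [].
split=> x y [Lx xI] Ly; (split; first exact: Lbr).
- exact: (annihilates_ideal_br xI Ly).1.
- exact: (annihilates_ideal_br xI Ly).2.
Qed.

Lemma quotient_annihilator_in_L (p : Q) : algebra_of_quotients br L ->
  p <> 0 -> annihilates_ideal p ->
  exists s, [/\ L s, s <> 0 & annihilates_ideal s].
Proof.
move=> Lquot p0 pI.
case: (Lquot p p p0) => [[x [[Lx [xL _]] xp]] | [y [[Ly [_ yL]] py]]].
- exists (br x p); split=> //; first exact/xL/genL_self.
  exact: (annihilates_ideal_br pI Lx).2.
- exists (br p y); split=> //; first exact/yL/genL_self.
  exact: (annihilates_ideal_br pI Ly).1.
Qed.

End IdealOfDense.
End Bilinear.

Theorem proposition6p5 (F : fieldType) (Q : lmodType F) (br : Q -> Q -> Q)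
  (L : Q -> Prop) :
  bilinear_br br -> symmetric_leibniz br ->
  subalgebra br L -> dense br L ->
  mult_semiprime br -> algebra_of_quotients br L ->
  forall I : Q -> Prop, essential_ideal br L I -> dense br I.
Proof.
move=> bil leib Lsub Ldense [Qsp Msp] Lquot I [Iideal Iess] mu Mmu muI u.
case: (eqVneq (mu u) 0) => // /eqP mu_u0; exfalso.
have muI_ann := ann_value_annihilates_ideal bil Ldense Iideal u Msp Mmu muI.
have [s [Ls s0 sI]] := quotient_annihilator_in_L bil Iideal leib Lquot mu_u0 muI_ann.
have [k [Ik [[_ kI] k0]]] :=
  Iess _ (ideal_annihilator bil Iideal leib Lsub) (ex_intro _ s (conj (conj Ls sI) s0)).
have [kl kr] := annihilates_ideal_central bil Ldense Iideal Msp Ik kI.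
exact/k0/(semiprime_central_eq0 bil Qsp kl kr).
Qed.
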